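(* Let $X$ be a proper, path connected metric space, let $S$ be a discrete subset of $X$, let $x_0\in S$, and let $n$ be an integer with $2\le n\le \#(S)$. Then every continuous path in $X$ from $x_0$ to a point of $B_n(x_0)$ intersects $B_{n-1}(x_0)$.
   Context: $(X,d)$ is a metric space. It is proper if for every $x\in X$ the function $d(x,\cdot)$ is a proper map (in particular every closed ball is compact). A subset $S\subseteq X$ is discrete if every compact subset of $X$ contains only finitely many points of $S$. For $x\in X$ and $r>0$ write $N_r(x)=\{y\in X: d(x,y)<r\}$ and $C_r(x)=\{y\in X: d(x,y)=r\}$; $\#(\cdot)$ denotes cardinality. For $x_0\in S$, a positive integer $n\le\#(S)$, and $x\in X$ with $r=d(x,x_0)$, define: $x\in B_n(x_0)$ iff $\#(N_r(x)\cap S)=m$ and $\#(C_r(x)\cap S)=\ell$ for some integers $m\ge 0$, $\ell\ge 1$ with $m+1\le n\le m+\ell$. *)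

From Stdlib Require Import Reals List.
Open Scope R_scope.

Section MetricDefs.
Context {X : Type}.

Definition is_metric (d : X -> X -> R) : Prop :=
  (forall x y, 0 <= d x y) /\
  (forall x y, d x y = 0 <-> x = y) /\
  (forall x y, d x y = d y x) /\
  (forall x y z, d x z <= d x y + d y z).

Definition mopen (d : X -> X -> R) (U : X -> Prop) : Prop :=
  forall x, U x -> exists e, 0 < e /\ forall y, d x y < e -> U y.

Definition mcompact (d : X -> X -> R) (K : X -> Prop) : Prop :=
  forall (I : Type) (U : I -> X -> Prop),
    (forall i, mopen d (U i)) ->
    (forall x, K x -> exists i, U i x) ->
    exists l : list I, forall x, K x -> exists i, In i l /\ U i x.

Definition has_card (A : X -> Prop) (m : nat) : Prop :=
  exists l : list X, NoDup l /\ length l = m /\ forall x, A x <-> In x l.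

Definition card_ge (A : X -> Prop) (n : nat) : Prop :=
  exists l : list X, NoDup l /\ length l = n /\ forall x, In x l -> A x.

Definition finite_set (A : X -> Prop) : Prop :=
  exists l : list X, forall x, A x -> In x l.

Definition discrete (d : X -> X -> R) (S : X -> Prop) : Prop :=
  forall K, mcompact d K -> finite_set (fun x => K x /\ S x).

Definition path_cont (d : X -> X -> R) (g : R -> X) : Prop :=
  forall t, 0 <= t <= 1 -> forall e, 0 < e -> exists dl, 0 < dl /\
    forall s, 0 <= s <= 1 -> Rabs (s - t) < dl -> d (g s) (g t) < e.

Definition path_connected (d : X -> X -> R) : Prop :=
  forall x y, exists g : R -> X, path_cont d g /\ g 0 = x /\ g 1 = y.

Definition Nball (d : X -> X -> R) (x : X) (r : R) : X -> Prop := fun y => d x y < r.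
Definition Csph (d : X -> X -> R) (x : X) (r : R) : X -> Prop := fun y => d x y = r.

Definition inB (d : X -> X -> R) (S : X -> Prop) (x0 : X) (n : nat) (x : X) : Prop :=
  let r := d x x0 in
  exists m l : nat,
    has_card (fun y => Nball d x r y /\ S y) m /\
    has_card (fun y => Csph d x r y /\ S y) l /\
    (1 <= l)%nat /\ (m + 1 <= n)%nat /\ (n <= m + l)%nat.

End MetricDefs.

Definition Rdist (a b : R) : R := Rabs (a - b).

Definition proper_space {X : Type} (d : X -> X -> R) : Prop :=
  forall (x : X) (K : R -> Prop), mcompact Rdist K -> mcompact d (fun y => K (d x y)).

(* Put r(y) := d(y, x0), and let A_k(y) (resp. B_k(y)) say that at least k points of S lie in the
   open (resp. closed) ball of radius r(y) about y.  Along a path g, the set of times where A_k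
   holds is open, because it is witnessed by finitely many strict inequalities; the set where B_k
   fails is open too, because properness and discreteness leave only finitely many points of S near
   the closed ball, and each of those outside it stays outside.  Once the balls are finite,
   y ∈ B_k(x0) means exactly B_k(y) ∧ ¬A_k(y).  If the path never met B_(n-1)(x0), then B_(n-1)
   and A_(n-1) would coincide along it and be both open and closed in [0,1]; but A_(n-1) fails at
   g(0) = x0 and B_(n-1) holds at g(1) ∈ B_n(x0), contradicting the connectedness of [0,1]. *)
From Stdlib Require Import Reals List.
From Stdlib Require Import Classical ClassicalEpsilon Lra Lia.
Open Scope R_scope.

Definition near01 (t : R) (P : R -> Prop) : Prop :=
  exists dl, 0 < dl /\ forall u, 0 <= u <= 1 -> Rabs (u - t) < dl -> P u.

Lemma near01_impl t (P Q : R -> Prop) :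
  (forall u, P u -> Q u) -> near01 t P -> near01 t Q.
Proof.
intros HPQ [dl [Hdl HP]]. exists dl; split; [exact Hdl|]. intros u Hu Hut; apply HPQ, HP; assumption.
Qed.

Lemma near01_and t (P Q : R -> Prop) :
  near01 t P -> near01 t Q -> near01 t (fun u => P u /\ Q u).
Proof.
intros [d1 [Hd1 HP]] [d2 [Hd2 HQ]].
exists (Rmin d1 d2); split; [now apply Rmin_pos|].
intros u Hu Hut; split.
- apply HP; [exact Hu|]. eapply Rlt_le_trans; [exact Hut|apply Rmin_l].
- apply HQ; [exact Hu|]. eapply Rlt_le_trans; [exact Hut|apply Rmin_r].
Qed.

Lemma near01_forall_in {A : Type} t (P : A -> R -> Prop) (l : list A) :
  (forall a, In a l -> near01 t (P a)) -> near01 t (fun u => forall a, In a l -> P a u).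
Proof.
induction l as [|a l IH]; intros Hl.
- exists 1; split; [lra|]. intros u _ _ a [].
- destruct (near01_and t _ _ (Hl a (or_introl eq_refl)) (IH (fun b Hb => Hl b (or_intror Hb))))
    as [dl [Hdl H]].
  exists dl; split; [exact Hdl|]. intros u Hu Hut b Hb.
  destruct (H u Hu Hut) as [Ha Hl']. destruct Hb as [<-|Hb]; [exact Ha|exact (Hl' b Hb)].
Qed.

Lemma unit_interval_connected (P : R -> Prop) :
  (forall t, 0 <= t <= 1 -> P t -> near01 t P) ->
  (forall t, 0 <= t <= 1 -> ~ P t -> near01 t (fun u => ~ P u)) ->
  P 0 -> P 1.
Proof.
intros HPopen HnPopen HP0.
set (E := fun t => 0 <= t <= 1 /\ forall u, 0 <= u <= t -> P u).
assert (E0 : E 0) by (split; [lra|]; intros u Hu; replace u with 0 by lra; exact HP0).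
destruct (completeness E) as [ts [Hub Hlub]].
{ exists 1; intros x [Hx _]; lra. }
{ exists 0; exact E0. }
assert (Hts : 0 <= ts <= 1) by (split; [apply Hub, E0|apply Hlub; intros x [Hx _]; lra]).
assert (Happrox : forall dl, 0 < dl -> exists e, E e /\ ts - dl < e).
{ intros dl Hdl. apply NNPP; intro Hno.
  enough (ts <= ts - dl) by lra.
  apply Hlub; intros x Ex. apply Rnot_lt_le; intro; apply Hno; eauto. }
assert (HPts : P ts).
{ apply NNPP; intro HnP.
  destruct (HnPopen ts Hts HnP) as [dl [Hdl HnPu]].
  destruct (Happrox dl Hdl) as [e [[He HEe] Hlt]].
  assert (e <= ts) by (apply Hub; split; assumption).
  apply (HnPu e He); [rewrite Rabs_left1; lra|]. apply HEe; lra. }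
destruct (HPopen ts Hts HPts) as [dl [Hdl HPu]].
destruct (Happrox dl Hdl) as [e [[He HEe] Hlt]].
set (t' := Rmin 1 (ts + dl / 2)).
assert (Et' : E t').
{ assert (t' <= 1) by apply Rmin_l. assert (t' <= ts + dl / 2) by apply Rmin_r.
  split; [unfold t', Rmin; destruct Rle_dec; lra|].
  intros u Hu. destruct (Rle_dec u e) as [Hue|Hue].
  - apply HEe; lra.
  - apply HPu; [lra|]. unfold Rabs; destruct Rcase_abs; lra. }
assert (t' <= ts) by (apply Hub, Et').
unfold t', Rmin in *; destruct Rle_dec; [|lra].
replace 1 with ts by lra; exact HPts.
Qed.

Lemma interval_mcompact a b : a <= b -> mcompact Rdist (fun r => a <= r <= b).
Proof.
intros Hab I U Hop Hcov.
destruct (Hcov a) as [i0 _]; [lra|].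
pose (pick := fun x => epsilon (inhabits i0) (fun i => U i x)).
assert (Hpick : forall x, a <= x <= b -> U (pick x) x)
  by (intros x Hx; apply epsilon_spec, Hcov, Hx).
assert (Hdom : forall x, (exists y, a <= x <= b /\ U (pick x) y) -> a <= x <= b)
  by (intros x [y [Hx _]]; exact Hx).
pose (fam := mkfamily (fun x => a <= x <= b) (fun x y => a <= x <= b /\ U (pick x) y) Hdom).
destruct (compact_P3 a b fam) as [D [HD [l Hl]]].
- split.
  + intros x Hx. exists x. split; auto.
  + intros x y [Hx Uy].
    destruct (Hop (pick x) y Uy) as [e [He HU]]. exists (mkposreal e He).
    intros z Hz. split; [exact Hx|]. apply HU.
    unfold Rdist; rewrite Rabs_minus_sym; exact Hz.
- exists (map pick l). intros x Hx. destruct (HD x Hx) as [y [[Hy Uy] Dy]].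
  exists (pick y). split; [apply in_map, Hl; split; assumption|exact Uy].
Qed.

Section Cardinality.
Context {X : Type}.

Lemma card_ge_of_NoDup (A : X -> Prop) (l : list X) k :
  NoDup l -> (k <= length l)%nat -> (forall x, In x l -> A x) -> card_ge A k.
Proof.
intros Hnd Hk HA.
assert (Hsplit := firstn_skipn k l).
exists (firstn k l); split; [|split].
- apply (NoDup_app_remove_r _ (skipn k l)). rewrite Hsplit; exact Hnd.
- apply firstn_length_le, Hk.
- intros x Hx. apply HA. rewrite <- Hsplit. apply in_or_app; left; exact Hx.
Qed.

Lemma card_ge_le_length (A : X -> Prop) (l : list X) k :
  card_ge A k -> (forall x, A x -> In x l) -> (k <= length l)%nat.
Proof.
intros [lA [Hnd [<- HlA]]] Hl.
apply NoDup_incl_length; [exact Hnd|]. intros x Hx; apply Hl, HlA, Hx.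
Qed.

Lemma card_ge_weaken (A B : X -> Prop) k m :
  (forall x, A x -> B x) -> (m <= k)%nat -> card_ge A k -> card_ge B m.
Proof.
intros HAB Hmk [l [Hnd [Hl HA]]].
apply (card_ge_of_NoDup B l); [exact Hnd|lia|]. intros x Hx; apply HAB, HA, Hx.
Qed.

Lemma has_card_of_finite (A : X -> Prop) : finite_set A -> exists m, has_card A m.
Proof.
intros [L HL].
pose (decX := fun x y : X => excluded_middle_informative (x = y)).
pose (inA := fun x => if excluded_middle_informative (A x) then true else false).
set (l := nodup decX (filter inA L)).
exists (length l), l. split; [apply NoDup_nodup|split; [reflexivity|]].
intros x. unfold l; rewrite nodup_In, filter_In. unfold inA.
destruct (excluded_middle_informative (A x)) as [Hx|Hx]; split.
- intros _; split; [apply HL, Hx|reflexivity].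
- intros _; exact Hx.
- intros HAx; contradiction.
- intros [_ Hf]; discriminate.
Qed.

End Cardinality.

Section PathAndBalls.
Context {X : Type} (d : X -> X -> R) (S : X -> Prop) (x0 : X).
Hypothesis d_metric : is_metric d.

Definition S_ball (y : X) : X -> Prop := fun s => d y s < d y x0 /\ S s.
Definition S_cball (y : X) : X -> Prop := fun s => d y s <= d y x0 /\ S s.

Lemma S_ball_sub_S_cball y s : S_ball y s -> S_cball y s.
Proof. intros [Hs Ss]; split; [lra|exact Ss]. Qed.

Lemma not_card_ge_S_ball_x0 k : (1 <= k)%nat -> ~ card_ge (S_ball x0) k.
Proof.
intros Hk [[|s l] [_ [Hl Hs]]]; [simpl in Hl; lia|].
destruct d_metric as [Hpos [Hzero _]].
destruct (Hs s (or_introl eq_refl)) as [Hlt _].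
rewrite (proj2 (Hzero x0 x0) eq_refl) in Hlt. specialize (Hpos x0 s). lra.
Qed.

Lemma card_ge_S_cball_of_inB k y : inB d S x0 k y -> card_ge (S_cball y) k.
Proof.
intros [m [c [[lN [HNd [HNl HN]]] [[lC [HCd [HCl HC]]] [_ [_ Hk]]]]]].
apply (card_ge_of_NoDup _ (lN ++ lC)).
- apply NoDup_app; [exact HNd|exact HCd|].
  intros a Ha Hb. apply HN in Ha. apply HC in Hb.
  destruct Ha as [Ha _], Hb as [Hb _]. unfold Nball, Csph in *. lra.
- rewrite length_app; lia.
- intros s Hs. apply in_app_or in Hs as [Hs|Hs].
  + apply HN in Hs as [Hs Ss]. unfold Nball in Hs. split; [lra|exact Ss].
  + apply HC in Hs as [Hs Ss]. unfold Csph in Hs. split; [lra|exact Ss].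
Qed.

Lemma path_dist_lt_near (g : R -> X) a b t :
  path_cont d g -> 0 <= t <= 1 -> d (g t) a < d (g t) b ->
  near01 t (fun u => d (g u) a < d (g u) b).
Proof.
intros Hg Ht Hab.
destruct d_metric as [_ [_ [Hsym Htri]]].
destruct (Hg t Ht ((d (g t) b - d (g t) a) / 2)) as [dl [Hdl Hclose]]; [lra|].
exists dl; split; [exact Hdl|]. intros u Hu Hut.
specialize (Hclose u Hu Hut).
pose proof (Htri (g u) (g t) a). pose proof (Htri (g t) (g u) b).
rewrite (Hsym (g t) (g u)) in *. lra.
Qed.

Lemma card_ge_S_ball_near (g : R -> X) k t :
  path_cont d g -> 0 <= t <= 1 -> card_ge (S_ball (g t)) k ->
  near01 t (fun u => card_ge (S_ball (g u)) k).
Proof.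
intros Hg Ht [l [Hnd [Hl Hs]]].
destruct (near01_forall_in t (fun s u => d (g u) s < d (g u) x0) l) as [dl [Hdl Hnear]].
{ intros s Hin. apply path_dist_lt_near; [exact Hg|exact Ht|apply Hs, Hin]. }
exists dl; split; [exact Hdl|]. intros u Hu Hut.
exists l; split; [exact Hnd|split; [exact Hl|]].
intros s Hin. split; [exact (Hnear u Hu Hut s Hin)|apply Hs, Hin].
Qed.

Hypothesis S_cball_finite : forall y r, finite_set (fun s => d y s <= r /\ S s).

(* While d(g u, g t) < 1, every closed ball B(g u, d(g u, x0)) lies within d(g t, x0) + 2 of g t. *)
Lemma S_cball_near_incl (g : R -> X) t :
  path_cont d g -> 0 <= t <= 1 ->
  near01 t (fun u => forall s, S_cball (g u) s -> S_cball (g t) s).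
Proof.
intros Hg Ht.
destruct (S_cball_finite (g t) (d (g t) x0 + 2)) as [L HL].
assert (Houtside : near01 t (fun u => forall s, In s L ->
                      d (g t) s <= d (g t) x0 \/ d (g u) x0 < d (g u) s)).
{ apply near01_forall_in. intros s _.
  destruct (Rle_dec (d (g t) s) (d (g t) x0)) as [Hle|Hgt].
  - exists 1; split; [lra|]. intros; left; exact Hle.
  - apply (near01_impl t _ _ (fun u H => or_intror H)).
    apply path_dist_lt_near; [exact Hg|exact Ht|lra]. }
assert (Hstep : near01 t (fun u => d (g u) (g t) < 1)).
{ destruct (Hg t Ht 1) as [dl [Hdl H]]; [lra|]. exists dl; split; [exact Hdl|exact H]. }
destruct (near01_and t _ _ Houtside Hstep) as [dl [Hdl Hnear]].
exists dl; split; [exact Hdl|]. intros u Hu Hut s [Hs Ss].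
destruct (Hnear u Hu Hut) as [Hout Hgu].
destruct d_metric as [_ [_ [Hsym Htri]]].
pose proof (Htri (g t) (g u) s). pose proof (Htri (g u) (g t) x0).
rewrite (Hsym (g t) (g u)) in *.
assert (HinL : In s L) by (apply HL; split; [lra|exact Ss]).
destruct (Hout s HinL) as [Hle|Hgt]; [split; [exact Hle|exact Ss]|lra].
Qed.

Lemma not_card_ge_S_cball_near (g : R -> X) k t :
  path_cont d g -> 0 <= t <= 1 -> ~ card_ge (S_cball (g t)) k ->
  near01 t (fun u => ~ card_ge (S_cball (g u)) k).
Proof.
intros Hg Ht HnB.
refine (near01_impl t _ _ _ (S_cball_near_incl g t Hg Ht)).
intros u Hincl HB. exact (HnB (card_ge_weaken _ _ k k Hincl (le_n k) HB)).
Qed.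

Lemma inB_of_card_ge k y :
  S x0 -> card_ge (S_cball y) k -> ~ card_ge (S_ball y) k -> inB d S x0 k y.
Proof.
intros Hx0 HB HnA.
assert (Hfin : forall P : X -> Prop, (forall s, P s -> S_cball y s) -> exists m, has_card P m).
{ intros P HP. apply has_card_of_finite.
  destruct (S_cball_finite y (d y x0)) as [L HL]. exists L; intros s Ps; apply HL, HP, Ps. }
destruct (Hfin (fun s => Nball d y (d y x0) s /\ S s)) as [m [lN [HNd [HNl HN]]]].
{ intros s [Hs Ss]. unfold Nball in Hs. split; [lra|exact Ss]. }
destruct (Hfin (fun s => Csph d y (d y x0) s /\ S s)) as [c [lC [HCd [HCl HC]]]].
{ intros s [Hs Ss]. unfold Csph in Hs. split; [lra|exact Ss]. }
exists m, c.
split; [exists lN; auto|]. split; [exists lC; auto|].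
split; [|split].
- assert (Hin : In x0 lC) by (apply HC; split; [reflexivity|exact Hx0]).
  destruct lC; [contradiction|simpl in HCl; lia].
- destruct (Compare_dec.le_lt_dec k m) as [Hkm|Hkm]; [|lia].
  exfalso; apply HnA. apply (card_ge_of_NoDup _ lN); [exact HNd|lia|].
  intros s Hs; apply HN, Hs.
- rewrite <- HNl, <- HCl, <- length_app.
  apply (card_ge_le_length _ _ _ HB). intros s [[Hlt|Heq] Ss]; apply in_or_app.
  + left; apply HN; split; assumption.
  + right; apply HC; split; assumption.
Qed.

End PathAndBalls.

Lemma proper_discrete_cball_finite {X : Type} (d : X -> X -> R) (S : X -> Prop) :
  is_metric d -> proper_space d -> discrete d S ->
  forall y r, finite_set (fun s => d y s <= r /\ S s).
Proof.
intros [Hpos _] Hproper Hdiscrete y r.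
destruct (Hdiscrete _ (Hproper y _ (interval_mcompact 0 (Rmax 0 r) (Rmax_l 0 r)))) as [L HL].
exists L. intros s [Hs Ss]. apply HL. split; [|exact Ss].
split; [apply Hpos|]. eapply Rle_trans; [exact Hs|apply Rmax_r].
Qed.

Theorem mainTheorem3 (X : Type) (d : X -> X -> R) (S : X -> Prop) (x0 : X) (n : nat) :
  is_metric d -> proper_space d -> path_connected d ->
  discrete d S -> S x0 -> (2 <= n)%nat -> card_ge S n ->
  forall g : R -> X, path_cont d g -> g 0 = x0 -> inB d S x0 n (g 1) ->
  exists t, 0 <= t <= 1 /\ inB d S x0 (n - 1) (g t).
Proof.
intros Hm Hproper _ Hdiscrete Hx0 Hn _ g Hg Hg0 Hg1.
pose proof (proper_discrete_cball_finite d S Hm Hproper Hdiscrete) as Hfin.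
apply NNPP; intro Hnone.
assert (Hball_of_cball : forall t, 0 <= t <= 1 ->
          card_ge (S_cball d S x0 (g t)) (n - 1) -> card_ge (S_ball d S x0 (g t)) (n - 1)).
{ intros t Ht HB. apply NNPP; intro HnA.
  apply Hnone; exists t; split; [exact Ht|]. exact (inB_of_card_ge d S x0 Hfin _ _ Hx0 HB HnA). }
assert (HnA1 : ~ card_ge (S_ball d S x0 (g 1)) (n - 1)).
{ apply (unit_interval_connected (fun t => ~ card_ge (S_ball d S x0 (g t)) (n - 1))).
  - intros t Ht HnA.
    refine (near01_impl t _ _ _ (not_card_ge_S_cball_near d S x0 Hm Hfin g _ t Hg Ht _)).
    + intros u HnB HA. exact (HnB (card_ge_weaken _ _ _ _ (S_ball_sub_S_cball d S x0 _) (le_n _) HA)).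
    + intros HB. exact (HnA (Hball_of_cball t Ht HB)).
  - intros t Ht HA. apply NNPP in HA.
    exact (near01_impl t _ _ (fun u HAu HnAu => HnAu HAu)
             (card_ge_S_ball_near d S x0 Hm g _ t Hg Ht HA)).
  - rewrite Hg0. apply (not_card_ge_S_ball_x0 d S x0 Hm). lia. }
apply HnA1, Hball_of_cball; [lra|].
apply (card_ge_weaken (S_cball d S x0 (g 1)) _ n); [tauto|lia|].
exact (card_ge_S_cball_of_inB d S x0 _ _ Hg1).
Qed.
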